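(* Let $(\sigma_n)_{n=1}^\infty$ be a strictly increasing sequence of positive integers with $\sigma_{n+1}\ge\sigma_n+n$ for all $n\ge1$ and $\lim_{n\to\infty}\frac{\sigma_{n+1}-\sigma_n}{n}=\beta$ for some real $\beta\ge1$. Let \[G((\sigma_n)_{n=1}^\infty)=\{x\in J\colon a_{\sigma_n}(x),\ldots,a_{\sigma_n+n-1}(x)\ \text{is an arithmetic progression for all sufficiently large}\ n\}.\] Then $\dim_{\rm H} G((\sigma_n)_{n=1}^\infty)\le\frac{\beta-1}{2\beta}$.
   Context: Every irrational $x\in(0,1)$ has a regular continued fraction expansion with partial quotients $a_n(x)\in\mathbb N$, $n\ge1$. $J=\{x\in(0,1)\setminus\mathbb Q\colon a_n(x)<a_{n+1}(x)\text{ for every }n\ge1\}$. $\dim_{\rm H}$ denotes Hausdorff dimension in $[0,1]$. *)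

From Stdlib Require Import Reals ZArith ClassicalEpsilon.
From Coquelicot Require Import Coquelicot.
Open Scope R_scope.

(** Floor of a real number (Int_part r = up r - 1 is the floor). *)
Definition floorR (r : R) : Z := Int_part r.

Definition gauss (x : R) : R := / x - IZR (floorR (/ x)).

(** Partial quotients: a_n(x) = floor(1 / T^(n-1) x), for n >= 1
    (the value at n = 0 is irrelevant and never used). *)
Definition cf_a (n : nat) (x : R) : nat :=
  Z.to_nat (floorR (/ Nat.iter (Nat.pred n) gauss x)).

Definition irrational (x : R) : Prop :=
  ~ exists p q : Z, q <> 0%Z /\ x = IZR p / IZR q.

Definition J_set (x : R) : Prop :=
  0 < x < 1 /\ irrational x /\
  forall n : nat, (1 <= n)%nat -> (cf_a n x < cf_a (S n) x)%nat.

(** Diameter (in Rbar; the empty set gets m_infty). *)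
Definition diam (U : R -> Prop) : Rbar :=
  Lub_Rbar (fun r => exists x y, U x /\ U y /\ r = Rabs (x - y)).

(** diam(U)^s, with the conventions diam(empty)^s = 0 and 0^0 = 1. *)
Definition diam_pow (s : R) (U : R -> Prop) : R :=
  if excluded_middle_informative (exists x, U x) then
    (let d := real (diam U) in
     if Req_EM_T d 0 then (if Req_EM_T s 0 then 1 else 0) else Rpower d s)
  else 0.

Definition hausdorff_delta (s delta : R) (E : R -> Prop) : Rbar :=
  Glb_Rbar (fun c => exists U : nat -> R -> Prop,
    (forall i, Rbar_le (diam (U i)) (Finite delta)) /\
    (forall x, E x -> exists i, U i x) /\
    Lim_seq (sum_n (fun i => diam_pow s (U i))) = Finite c).

Definition hausdorff_measure (s : R) (E : R -> Prop) : Rbar :=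
  Lub_Rbar (fun r => exists delta, 0 < delta /\
                       Rbar_le (Finite r) (hausdorff_delta s delta E)).

Definition hausdorff_dim (E : R -> Prop) : Rbar :=
  Glb_Rbar (fun s => 0 <= s /\ hausdorff_measure s E = Finite 0).

Definition is_AP_block (x : R) (m n : nat) : Prop :=
  exists d : Z, forall k : nat, (k < n)%nat ->
    Z.of_nat (cf_a (m + k) x) = (Z.of_nat (cf_a m x) + Z.of_nat k * d)%Z.

Definition G_set (sigma : nat -> nat) (x : R) : Prop :=
  J_set x /\
  exists N : nat, forall n : nat, (1 <= n)%nat -> (N <= n)%nat ->
    is_AP_block x (sigma n) n.

(* Fix (beta - 1) / (2 beta) < s < 1/2 and put t = 2 s; it suffices that H^s(G) = 0.
   Up to the end of a block n, a point of G whose digits form progressions from block N on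
   is determined by a word listing, for each block m, its first term a, its common
   difference d and the g digits before it, all smaller than a since the digits of a point
   of J increase. The cylinder of these digits has diameter at most prod a_j^-2, so its
   s-th power is at most prod a_j^-t, and summing over words, block m contributes at most
   sum_(a >= m, d >= 1) (a + d)^(-t (m - 1)) (sum_(x < a) x^-t)^g
     <= 4 (1 - t)^-g m^-(t (m - 1) - 4 - (1 - t) g).
   As g is about (beta - 1) m, this tends to 0 as soon as t > (1 - t) (beta - 1), that
   is when s > (beta - 1) / (2 beta). So the blocks beyond some N0 contribute at most 1
   each, and stopping at a late enough block makes the total weight arbitrarily small. *)

From Stdlib Require Import Reals ZArith Lra Lia List Bool ClassicalEpsilon Cantor.
From Coquelicot Require Import Coquelicot.
Import ListNotations.
Open Scope R_scope.

(** * Continued fractions *)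

Lemma floorR_spec r : IZR (floorR r) <= r < IZR (floorR r) + 1.
Proof. unfold floorR. destruct (base_Int_part r). lra. Qed.

Lemma gauss_spec x : 0 < x < 1 ->
  (1 <= floorR (/ x))%Z /\ 0 <= gauss x < 1 /\ x = / (IZR (floorR (/ x)) + gauss x).
Proof.
  intros Hx. destruct (floorR_spec (/ x)) as [Hlo Hhi].
  assert (Hinv : 1 < / x) by (rewrite <- Rinv_1; apply Rinv_lt_contravar; lra).
  assert (Ha : (1 <= floorR (/ x))%Z).
  { assert (0 < IZR (floorR (/ x))) by lra. apply lt_IZR in H. lia. }
  unfold gauss. repeat split; try lra; auto.
  replace (IZR (floorR (/ x)) + (/ x - IZR (floorR (/ x)))) with (/ x) by ring.
  now rewrite Rinv_inv.
Qed.

Lemma gauss_irrational x : 0 < x < 1 -> irrational x ->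
  0 < gauss x < 1 /\ irrational (gauss x).
Proof.
  intros Hx Hirr. destruct (gauss_spec x Hx) as [Ha [Hg Hxe]].
  set (a := floorR (/ x)) in *.
  assert (HaR : 1 <= IZR a) by (apply IZR_le; lia).
  assert (Hirr' : irrational (gauss x)).
  { intros [p [q [Hq Hpq]]]. apply Hirr.
    assert (HqR : IZR q <> 0) by (apply not_0_IZR; auto).
    assert (Hgq : gauss x * IZR q = IZR p) by (rewrite Hpq; field; auto).
    (* x = 1 / (a + p/q) = q / (a q + p) *)
    assert (Hden : IZR (a * q + p) = IZR q * (IZR a + gauss x)).
    { rewrite plus_IZR, mult_IZR, <- Hgq. ring. }
    exists q, (a * q + p)%Z. split.
    - intros H0. apply (f_equal IZR) in H0. rewrite Hden in H0.
      apply Rmult_integral in H0. lra.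
    - rewrite Hxe, Hden. field. lra. }
  split; [|exact Hirr'].
  destruct Hg as [[Hg | Hg] Hg1]; [lra|].
  exfalso. apply Hirr'. exists 0%Z, 1%Z. split; [lia|]. rewrite <- Hg. simpl. field.
Qed.

Lemma cf_a_1 x : cf_a 1 x = Z.to_nat (floorR (/ x)).
Proof. reflexivity. Qed.

Lemma cf_a_succ n x : (1 <= n)%nat -> cf_a (S n) x = cf_a n (gauss x).
Proof.
  intros Hn. destruct n as [|n]; [lia|].
  unfold cf_a. simpl Nat.pred. now rewrite Nat.iter_succ_r.
Qed.

Lemma INR_cf_a_1 x : 0 < x < 1 -> INR (cf_a 1 x) = IZR (floorR (/ x)).
Proof.
  intros Hx. destruct (gauss_spec x Hx) as [Ha _].
  now rewrite cf_a_1, INR_IZR_INZ, Z2Nat.id by lia.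
Qed.

Fixpoint prod_range (f : nat -> R) (k L : nat) : R :=
  match L with O => 1 | S L' => f k * prod_range f (S k) L' end.

Lemma prod_range_shift f k L : prod_range f (S k) L = prod_range (fun j => f (S j)) k L.
Proof. revert k; induction L; intros k; simpl; [|rewrite IHL]; auto. Qed.

Lemma prod_range_ext f g k L : (forall j, (k <= j < k + L)%nat -> f j = g j) ->
  prod_range f k L = prod_range g k L.
Proof.
  revert k; induction L; intros k H; simpl; auto.
  rewrite (H k), (IHL (S k)); auto; [intros j Hj; apply H|]; lia.
Qed.

Lemma prod_range_app f k L1 L2 :
  prod_range f k (L1 + L2) = prod_range f k L1 * prod_range f (k + L1) L2.
Proof.
  revert k; induction L1; intros k; simpl.
  - rewrite Nat.add_0_r. ring.
  - rewrite IHL1. replace (k + S L1)%nat with (S k + L1)%nat by lia. ring.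
Qed.

Lemma prod_range_pos f k L : (forall j, 0 < f j) -> 0 < prod_range f k L.
Proof. intros H. revert k; induction L; intros k; simpl; [lra|]. now apply Rmult_lt_0_compat. Qed.

Lemma prod_range_unit f k L : (forall j, (k <= j)%nat -> 0 <= f j <= 1) ->
  0 <= prod_range f k L <= 1.
Proof.
  revert k; induction L; intros k H; simpl; [lra|].
  assert (IH := IHL (S k) ltac:(intros j Hj; apply H; lia)).
  specialize (H k (le_n k)). nra.
Qed.

Lemma prod_range_le_factor f k L j : (forall i, (k <= i)%nat -> 0 <= f i <= 1) ->
  (k <= j < k + L)%nat -> prod_range f k L <= f j.
Proof.
  revert k; induction L; intros k H Hj; [lia|]. simpl.
  assert (Hk := H k (le_n k)).
  assert (Hrest := prod_range_unit f (S k) L ltac:(intros i Hi; apply H; lia)).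
  destruct (Nat.eq_dec j k) as [->|Hjk]; [nra|].
  assert (IH := IHL (S k) ltac:(intros i Hi; apply H; lia) ltac:(lia)). nra.
Qed.

Lemma Rpower_1_l e : Rpower 1 e = 1.
Proof. unfold Rpower. now rewrite ln_1, Rmult_0_r, exp_0. Qed.

Lemma Rpower_prod_range g k L s : (forall j, 0 < g j) ->
  Rpower (prod_range g k L) s = prod_range (fun j => Rpower (g j) s) k L.
Proof.
  intros Hg. revert k; induction L; intros k; simpl; [apply Rpower_1_l|].
  rewrite <- IHL, Rpower_mult_distr; auto. now apply prod_range_pos.
Qed.

Lemma inv_shift_dist a u v : 1 <= a -> 0 <= u -> 0 <= v ->
  Rabs (/ (a + u) - / (a + v)) <= Rabs (u - v) / a ^ 2.
Proof.
  intros Ha Hu Hv.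
  replace (/ (a + u) - / (a + v)) with ((v - u) / ((a + u) * (a + v))) by (field; lra).
  rewrite Rabs_div, (Rabs_right ((a + u) * (a + v))), Rabs_minus_sym by nra.
  unfold Rdiv. apply Rmult_le_compat_l; [apply Rabs_pos|].
  apply Rinv_le_contravar; nra.
Qed.

(* Each agreeing partial quotient a contracts the distance by the factor a^2. *)
Lemma cylinder_dist_le L : forall x y,
  0 < x < 1 -> irrational x -> 0 < y < 1 -> irrational y ->
  (forall j, (1 <= j <= L)%nat -> cf_a j x = cf_a j y) ->
  Rabs (x - y) <= prod_range (fun j => / INR (cf_a j x) ^ 2) 1 L.
Proof.
  induction L as [|L IH]; intros x y Hx Hix Hy Hiy Hagree.
  { simpl. apply Rabs_le. lra. }
  destruct (gauss_spec x Hx) as [Ha [Hgx Hxe]], (gauss_spec y Hy) as [_ [Hgy Hye]].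
  destruct (gauss_irrational x Hx Hix) as [Hx' Hix'], (gauss_irrational y Hy Hiy) as [Hy' Hiy'].
  assert (Hfloor : floorR (/ x) = floorR (/ y)).
  { assert (H1 := Hagree 1%nat ltac:(lia)). rewrite !cf_a_1 in H1.
    destruct (gauss_spec y Hy) as [Hb _]. apply Z2Nat.inj in H1; lia. }
  assert (Htail : Rabs (gauss x - gauss y) <=
                  prod_range (fun j => / INR (cf_a j (gauss x)) ^ 2) 1 L).
  { apply IH; auto. intros j Hj. rewrite <- !cf_a_succ by lia. apply Hagree. lia. }
  assert (HaR : 1 <= IZR (floorR (/ x))) by (apply IZR_le; lia).
  assert (Hhead : Rabs (x - y) <= Rabs (gauss x - gauss y) / IZR (floorR (/ x)) ^ 2).
  { pose proof (inv_shift_dist _ (gauss x) (gauss y) HaR ltac:(lra) ltac:(lra)) as Hd.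
    rewrite <- Hfloor in Hye. now rewrite <- Hxe, <- Hye in Hd. }
  simpl prod_range. rewrite prod_range_shift.
  rewrite (prod_range_ext _ (fun j => / INR (cf_a j (gauss x)) ^ 2))
    by (intros j Hj; now rewrite cf_a_succ by lia).
  rewrite INR_cf_a_1 by auto.
  eapply Rle_trans; [exact Hhead|].
  unfold Rdiv. rewrite Rmult_comm. apply Rmult_le_compat_l; [|exact Htail].
  apply Rlt_le, Rinv_0_lt_compat. nra.
Qed.

(** * Hausdorff measure *)

Lemma diam_pow_nonneg s U : 0 <= diam_pow s U.
Proof.
  unfold diam_pow. destruct excluded_middle_informative; [|lra].
  destruct Req_EM_T; [destruct Req_EM_T; lra|].
  unfold Rpower. left. apply exp_pos.
Qed.

Lemma diam_le_of_dist_le s U B : 0 < s -> 0 < B ->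
  (forall x y, U x -> U y -> Rabs (x - y) <= B) ->
  Rbar_le (diam U) (Finite B) /\ diam_pow s U <= Rpower B s.
Proof.
  intros Hs HB H.
  set (D := fun r => exists x y, U x /\ U y /\ r = Rabs (x - y)).
  destruct (Lub_Rbar_correct D) as [Hub Hlub].
  assert (HdB : Rbar_le (diam U) (Finite B)).
  { apply Hlub. intros r [x [y [Hx [Hy ->]]]]. now apply H. }
  split; auto.
  unfold diam_pow. destruct excluded_middle_informative as [[x0 Hx0]|];
    [|unfold Rpower; left; apply exp_pos].
  assert (Hd0 : Rbar_le (Finite 0) (diam U)).
  { apply Hub. exists x0, x0. repeat split; auto. now rewrite Rminus_diag, Rabs_R0. }
  destruct (diam U) as [d| |]; simpl in *; try contradiction.
  destruct Req_EM_T; [destruct Req_EM_T; [lra|unfold Rpower; left; apply exp_pos]|].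
  apply Rle_Rpower_l; lra.
Qed.

(* Also covers the empty set, whose diameter is [m_infty] and whose [diam_pow] is 0. *)
Lemma diam_bounds_of_witness V s delta c : 0 < s -> 0 < delta -> 0 <= c ->
  (forall x0, V x0 -> exists B, 0 < B <= delta /\ Rpower B s <= c /\
     forall x y, V x -> V y -> Rabs (x - y) <= B) ->
  Rbar_le (diam V) (Finite delta) /\ diam_pow s V <= c.
Proof.
  intros Hs Hd Hc HV. destruct (classic (exists x0, V x0)) as [[x0 Hx0]|Hempty].
  - destruct (HV x0 Hx0) as [B [HB [HBc Hdist]]].
    destruct (diam_le_of_dist_le s V B Hs ltac:(lra) Hdist) as [HdB HpB].
    split; [|lra]. eapply Rbar_le_trans; [exact HdB|]. simpl. lra.
  - split.
    + apply (diam_le_of_dist_le s V delta Hs Hd).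
      intros x y Hx. exfalso. apply Hempty. now exists x.
    + unfold diam_pow. destruct excluded_middle_informative; [contradiction|lra].
Qed.

Lemma hausdorff_delta_null_of_covers E s delta :
  (forall eps, 0 < eps -> exists U : nat -> R -> Prop,
     (forall i, Rbar_le (diam (U i)) (Finite delta)) /\
     (forall x, E x -> exists i, U i x) /\
     (forall K, sum_f_R0 (fun i => diam_pow s (U i)) K <= eps)) ->
  hausdorff_delta s delta E = Finite 0.
Proof.
  intros Hcov. unfold hausdorff_delta.
  set (C := fun c => exists U : nat -> R -> Prop,
    (forall i, Rbar_le (diam (U i)) (Finite delta)) /\
    (forall x, E x -> exists i, U i x) /\
    Lim_seq (sum_n (fun i => diam_pow s (U i))) = Finite c).
  destruct (Glb_Rbar_correct C) as [Hlb Hglb].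
  assert (Hsmall : forall eps, 0 < eps -> Rbar_le (Glb_Rbar C) (Finite eps)).
  { intros eps Heps. destruct (Hcov eps Heps) as [U [HUd [HUc HUs]]].
    set (u := sum_n (fun i => diam_pow s (U i))).
    assert (Hinc : forall n, u n <= u (S n)).
    { intros n. unfold u. rewrite sum_Sn. unfold plus; simpl.
      pose proof (diam_pow_nonneg s (U (S n))). lra. }
    assert (Hbd : forall n, u n <= eps) by (intros n; unfold u; rewrite sum_n_Reals; apply HUs).
    destruct (proj1 (ex_finite_lim_seq_correct u) (ex_finite_lim_seq_incr u eps Hinc Hbd))
      as [_ Hfin].
    apply Rbar_le_trans with (Finite (real (Lim_seq u))).
    - apply Hlb. exists U. repeat split; auto.
    - rewrite Hfin, <- (Lim_seq_const eps). apply Lim_seq_le_loc. exists O. intros n _. apply Hbd. }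
  apply Rbar_le_antisym.
  - destruct (Glb_Rbar C) as [g| |]; simpl; auto.
    + destruct (Rle_dec g 0) as [|Hg]; auto.
      specialize (Hsmall (g / 2) ltac:(lra)). simpl in Hsmall. lra.
    + exact (Hsmall 1 Rlt_0_1).
  - apply Hglb. intros c [U [_ [_ HU]]].
    rewrite <- HU, <- (Lim_seq_const 0). apply Lim_seq_le_loc. exists O. intros n _.
    rewrite sum_n_Reals. clear. induction n; simpl; [apply diam_pow_nonneg|].
    pose proof (diam_pow_nonneg s (U (S n))). lra.
Qed.

Lemma hausdorff_measure_null_of_covers E s :
  (forall delta eps, 0 < delta -> 0 < eps -> exists U : nat -> R -> Prop,
     (forall i, Rbar_le (diam (U i)) (Finite delta)) /\
     (forall x, E x -> exists i, U i x) /\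
     (forall K, sum_f_R0 (fun i => diam_pow s (U i)) K <= eps)) ->
  hausdorff_measure s E = Finite 0.
Proof.
  intros Hcov.
  assert (Hd : forall delta, 0 < delta -> hausdorff_delta s delta E = Finite 0).
  { intros delta Hdelta. apply hausdorff_delta_null_of_covers. auto. }
  unfold hausdorff_measure.
  destruct (Lub_Rbar_correct (fun r => exists delta, 0 < delta /\
    Rbar_le (Finite r) (hausdorff_delta s delta E))) as [Hub Hlub].
  apply Rbar_le_antisym.
  - apply Hlub. intros r [delta [Hdelta Hr]]. now rewrite Hd in Hr.
  - apply Hub. exists 1. rewrite Hd by lra. simpl. lra.
Qed.

Lemma hausdorff_dim_le_of_null E b c : 0 <= b < c ->
  (forall s, b < s < c -> hausdorff_measure s E = Finite 0) ->
  Rbar_le (hausdorff_dim E) (Finite b).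
Proof.
  intros Hb H. unfold hausdorff_dim.
  set (S := fun s => 0 <= s /\ hausdorff_measure s E = Finite 0).
  destruct (Glb_Rbar_correct S) as [Hlb _].
  assert (Hall : forall s, b < s < c -> Rbar_le (Glb_Rbar S) (Finite s)).
  { intros s Hs. apply Hlb. split; [lra|]. now apply H. }
  destruct (Glb_Rbar S) as [g| |]; simpl; auto.
  - destruct (Rle_dec g b) as [|Hgb]; auto.
    set (s := (b + Rmin g c) / 2).
    assert (Hs : b < s < c) by (unfold s, Rmin; destruct Rle_dec; lra).
    specialize (Hall s Hs). simpl in Hall. unfold s, Rmin in Hall. destruct Rle_dec; lra.
  - apply (Hall ((b + c) / 2)). lra.
Qed.

(** * Finite sums over words *)

Fixpoint sumR (g : nat -> R) (n : nat) : R :=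
  match n with O => 0 | S n' => sumR g n' + g n' end.

Lemma sumR_le g h n : (forall a, (a < n)%nat -> g a <= h a) -> sumR g n <= sumR h n.
Proof.
  induction n; simpl; intros H; [lra|].
  assert (g n <= h n) by (apply H; lia).
  assert (sumR g n <= sumR h n) by (apply IHn; intros; apply H; lia). lra.
Qed.

Lemma sumR_nonneg g n : (forall a, (a < n)%nat -> 0 <= g a) -> 0 <= sumR g n.
Proof.
  intros H. assert (Hz : sumR (fun _ => 0) n = 0) by (clear; induction n; simpl; lra).
  rewrite <- Hz. now apply sumR_le.
Qed.

Lemma sumR_ext g h n : (forall a, (a < n)%nat -> g a = h a) -> sumR g n = sumR h n.
Proof. induction n; simpl; intros H; auto. rewrite IHn, H; auto; lia. Qed.

Lemma sumR_scal c g n : sumR (fun a => c * g a) n = c * sumR g n.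
Proof. induction n; simpl; [ring|]. rewrite IHn. ring. Qed.

Lemma sum_f_R0_sumR g K : sum_f_R0 g K = sumR g (S K).
Proof. induction K; simpl; [ring|]. rewrite IHK. simpl. ring. Qed.

Lemma sumR_le_of_vanish g a n : (forall x, 0 <= g x) -> (forall x, (a <= x)%nat -> g x = 0) ->
  sumR g n <= sumR g a.
Proof.
  intros Hg Hv. destruct (le_lt_dec n a) as [Hna|Han].
  - replace a with (n + (a - n))%nat by lia.
    induction (a - n)%nat as [|k IH]; [rewrite Nat.add_0_r; lra|].
    rewrite Nat.add_succ_r. simpl. specialize (Hg (n + k)%nat). lra.
  - replace n with (a + (n - a))%nat by lia.
    induction (n - a)%nat as [|k IH]; [rewrite Nat.add_0_r; lra|].
    rewrite Nat.add_succ_r. simpl. rewrite Hv by lia. lra.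
Qed.

Lemma sumR_halves eps n : sumR (fun N => eps / 2 ^ S N) n = eps - eps / 2 ^ n.
Proof.
  induction n; cbn [sumR]; [simpl; field|].
  rewrite IHn. simpl. field. apply pow_nonzero. lra.
Qed.

Definition sumL {A} (f : A -> R) (l : list A) : R := fold_right (fun x acc => f x + acc) 0 l.

Lemma sumL_app {A} (f : A -> R) l1 l2 : sumL f (l1 ++ l2) = sumL f l1 + sumL f l2.
Proof. induction l1; simpl; [ring|]. rewrite IHl1. ring. Qed.

Lemma sumL_nonneg {A} (f : A -> R) l : (forall x, 0 <= f x) -> 0 <= sumL f l.
Proof. intros H; induction l; simpl; [lra|]. specialize (H a). lra. Qed.

Lemma sumL_incl {A} (f : A -> R) l B :
  NoDup l -> incl l B -> (forall x, 0 <= f x) -> sumL f l <= sumL f B.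
Proof.
  revert B. induction l as [|x l IH]; intros B Hnd Hinc Hf; [now apply sumL_nonneg|].
  inversion Hnd as [|? ? Hx Hnd']; subst.
  destruct (in_split x B (Hinc x (in_eq x l))) as [B1 [B2 ->]].
  assert (Hrest : sumL f l <= sumL f (B1 ++ B2)).
  { apply IH; auto. intros y Hy.
    assert (Hy' := Hinc y (in_cons x y l Hy)).
    apply in_app_or in Hy'. apply in_or_app.
    destruct Hy' as [H|[H|H]]; auto. subst. contradiction. }
  rewrite sumL_app in *. simpl. lra.
Qed.

Lemma sumL_seq g n : sumL g (seq 0 n) = sumR g n.
Proof. induction n; auto. rewrite seq_S, sumL_app, IHn. simpl. ring. Qed.

Lemma sumL_map {A B} (f : B -> R) (h : A -> B) l : sumL f (map h l) = sumL (fun x => f (h x)) l.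
Proof. induction l; simpl; auto. now rewrite IHl. Qed.

Lemma sumL_flat_map {A B} (f : B -> R) (h : A -> list B) l :
  sumL f (flat_map h l) = sumL (fun x => sumL f (h x)) l.
Proof. induction l; simpl; auto. now rewrite sumL_app, IHl. Qed.

Fixpoint words (L M : nat) : list (list nat) :=
  match L with
  | O => [[]]
  | S L' => flat_map (fun a => map (cons a) (words L' M)) (seq 0 (S M))
  end.

Fixpoint sum_words (L M : nat) (f : list nat -> R) : R :=
  match L with
  | O => f []
  | S L' => sumR (fun a => sum_words L' M (fun l => f (a :: l))) (S M)
  end.

Lemma sum_words_S L M f :
  sum_words (S L) M f = sumR (fun a => sum_words L M (fun l => f (a :: l))) (S M).
Proof. reflexivity. Qed.

Lemma sumL_words L M f : sumL f (words L M) = sum_words L M f.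
Proof.
  revert f; induction L; intros f; [simpl; ring|]. cbn [words sum_words].
  rewrite sumL_flat_map, sumL_seq. apply sumR_ext. intros a _.
  rewrite sumL_map. apply IHL.
Qed.

Lemma in_words L M l : length l = L -> (forall x, In x l -> (x <= M)%nat) -> In l (words L M).
Proof.
  revert l; induction L; intros [|a l] Hl Hx; simpl in Hl; try discriminate; [now left|].
  cbn [words]. apply in_flat_map. exists a. split.
  - apply in_seq. assert (a <= M)%nat by (apply Hx; left; auto). lia.
  - apply in_map, IHL; [lia|]. intros x Hin. apply Hx. now right.
Qed.

Lemma sum_words_ext L M f g : (forall l, length l = L -> f l = g l) ->
  sum_words L M f = sum_words L M g.
Proof.
  revert f g; induction L; intros f g H; cbn [sum_words]; [now apply H|].
  apply sumR_ext. intros a _. apply IHL. intros l Hl. apply H. simpl; lia.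
Qed.

Lemma sum_words_nonneg L M f : (forall l, 0 <= f l) -> 0 <= sum_words L M f.
Proof.
  revert f; induction L; intros f H; cbn [sum_words]; auto.
  apply sumR_nonneg. intros a _. apply IHL. auto.
Qed.

Lemma sum_words_scal L M c f : sum_words L M (fun l => c * f l) = c * sum_words L M f.
Proof.
  revert f; induction L; intros f; cbn [sum_words]; auto.
  rewrite <- sumR_scal. apply sumR_ext. intros a _. apply IHL.
Qed.

Lemma sum_words_app L1 L2 M f :
  sum_words (L1 + L2) M f = sum_words L1 M (fun l1 => sum_words L2 M (fun l2 => f (l1 ++ l2))).
Proof.
  revert f; induction L1; intros f; cbn [sum_words Nat.add]; auto.
  apply sumR_ext. intros a _. apply IHL1.
Qed.

Fixpoint prod_list (phi : nat -> R) (l : list nat) : R :=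
  match l with [] => 1 | x :: l' => phi x * prod_list phi l' end.

Lemma prod_list_app phi l1 l2 : prod_list phi (l1 ++ l2) = prod_list phi l1 * prod_list phi l2.
Proof. induction l1; simpl; [ring|]. rewrite IHl1. ring. Qed.

Lemma prod_list_nonneg phi l : (forall x, 0 <= phi x) -> 0 <= prod_list phi l.
Proof. intros H. induction l; simpl; [lra|]. now apply Rmult_le_pos. Qed.

Lemma sum_words_prod_list L M phi : sum_words L M (prod_list phi) = sumR phi (S M) ^ L.
Proof.
  revert phi. induction L; intros phi; [reflexivity|].
  cbn [sum_words]. rewrite <- tech_pow_Rmult, <- IHL, Rmult_comm, <- sumR_scal.
  apply sumR_ext. intros a _. cbn [prod_list]. rewrite sum_words_scal. ring.
Qed.

Fixpoint decode_word (L r : nat) : list nat :=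
  match L with O => [] | S L' => let (a, r') := of_nat r in a :: decode_word L' r' end.

Fixpoint encode_word (l : list nat) : nat :=
  match l with [] => O | a :: l' => to_nat (a, encode_word l') end.

Lemma decode_encode_word l : decode_word (length l) (encode_word l) = l.
Proof. induction l; auto. cbn [length encode_word decode_word]. now rewrite cancel_of_to, IHl. Qed.

Lemma of_nat_le i : (fst (of_nat i) <= i /\ snd (of_nat i) <= i)%nat.
Proof.
  pose proof (cancel_to_of i). destruct (of_nat i) as [x y]. simpl.
  pose proof (to_nat_non_decreasing x y). lia.
Qed.

Lemma decode_word_le L r x : In x (decode_word L r) -> (x <= r)%nat.
Proof.
  revert r; induction L; intros r H; simpl in H; [contradiction|].
  pose proof (of_nat_le r). destruct (of_nat r) as [a r']. simpl in *.
  destruct H as [H|H]; [lia|]. apply IHL in H. lia.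
Qed.

Lemma decode_word_length L r : length (decode_word L r) = L.
Proof. revert r; induction L; intros r; simpl; auto. destruct (of_nat r). simpl. auto. Qed.

(* Index [i] codes the pair [(N, l)] with [l] a word of length [Lf N]; [canonical_index]
   singles out the indices that are the actual code of the pair they decode to. *)
Definition decode_index (Lf : nat -> nat) (i : nat) : nat * list nat :=
  let (N, r) := of_nat i in (N, decode_word (Lf N) r).

Definition canonical_index (Lf : nat -> nat) (i : nat) : bool :=
  Nat.eqb (to_nat (fst (decode_index Lf i), encode_word (snd (decode_index Lf i)))) i.

Lemma decode_index_surj Lf N l : length l = Lf N ->
  exists i, canonical_index Lf i = true /\ decode_index Lf i = (N, l).
Proof.
  intros Hl. exists (to_nat (N, encode_word l)).
  assert (E : decode_index Lf (to_nat (N, encode_word l)) = (N, l)).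
  { unfold decode_index. now rewrite cancel_of_to, <- Hl, decode_encode_word. }
  split; auto. unfold canonical_index. rewrite E. apply Nat.eqb_refl.
Qed.

Definition index_weight (Lf : nat -> nat) (w : nat -> list nat -> R) (i : nat) : R :=
  if canonical_index Lf i then w (fst (decode_index Lf i)) (snd (decode_index Lf i)) else 0.

Definition words_upto (Lf : nat -> nat) (M : nat) : list (nat * list nat) :=
  flat_map (fun N => map (fun l => (N, l)) (words (Lf N) M)) (seq 0 (S M)).

Lemma decode_index_in_words_upto Lf K i : (i <= K)%nat ->
  In (decode_index Lf i) (words_upto Lf K).
Proof.
  intros Hi. unfold decode_index. pose proof (of_nat_le i). destruct (of_nat i) as [N r].
  simpl in *. apply in_flat_map. exists N. split; [apply in_seq; lia|].
  apply in_map, in_words; [apply decode_word_length|].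
  intros x Hx. apply decode_word_le in Hx. lia.
Qed.

(* Distinct canonical indices decode to distinct pairs, so the partial sums of the
   index weights are dominated by sums over boxes of words. *)
Lemma sum_index_weight_le Lf w eps : 0 < eps -> (forall N l, 0 <= w N l) ->
  (forall N M, sum_words (Lf N) M (w N) <= eps / 2 ^ S N) ->
  forall K, sum_f_R0 (index_weight Lf w) K <= eps.
Proof.
  intros Heps Hnn Hb K.
  set (idx := filter (canonical_index Lf) (seq 0 (S K))).
  set (F := fun p : nat * list nat => w (fst p) (snd p)).
  assert (E1 : sum_f_R0 (index_weight Lf w) K = sumL F (map (decode_index Lf) idx)).
  { rewrite sum_f_R0_sumR, <- sumL_seq, sumL_map. unfold idx.
    induction (seq 0 (S K)) as [|i l IH]; simpl; auto.
    unfold index_weight at 1. destruct (canonical_index Lf i); simpl; rewrite <- IH; unfold F; ring. }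
  assert (Hnd : NoDup (map (decode_index Lf) idx)).
  { apply NoDup_map_NoDup_ForallPairs; [|apply NoDup_filter, seq_NoDup].
    intros i j Hi Hj He. unfold idx in Hi, Hj. apply filter_In in Hi, Hj.
    destruct Hi as [_ Hi], Hj as [_ Hj]. unfold canonical_index in Hi, Hj.
    apply Nat.eqb_eq in Hi, Hj. now rewrite <- Hi, <- Hj, He. }
  rewrite E1. apply Rle_trans with (sumL F (words_upto Lf K)).
  - apply sumL_incl; auto; [|intros [N l]; apply Hnn].
    intros p Hp. apply in_map_iff in Hp. destruct Hp as [i [<- Hin]].
    unfold idx in Hin. apply filter_In in Hin. destruct Hin as [Hin _]. apply in_seq in Hin.
    apply decode_index_in_words_upto. lia.
  - unfold words_upto. rewrite sumL_flat_map, sumL_seq.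
    apply Rle_trans with (sumR (fun N => eps / 2 ^ S N) (S K)).
    + apply sumR_le. intros N _. rewrite sumL_map. unfold F; simpl. rewrite sumL_words. apply Hb.
    + rewrite sumR_halves. assert (0 < eps / 2 ^ S K) by (apply Rdiv_lt_0_compat; [auto|apply pow_lt; lra]).
      lra.
Qed.

Lemma hausdorff_measure_null_of_word_covers E s : 0 < s ->
  (forall delta eps, 0 < delta -> 0 < eps ->
     exists (Lf : nat -> nat) (V : nat -> list nat -> R -> Prop) (w : nat -> list nat -> R),
       (forall N l, 0 <= w N l) /\
       (forall N M, sum_words (Lf N) M (w N) <= eps / 2 ^ S N) /\
       (forall N l, Rbar_le (diam (V N l)) (Finite delta) /\ diam_pow s (V N l) <= w N l) /\
       (forall x, E x -> exists N l, length l = Lf N /\ V N l x)) ->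
  hausdorff_measure s E = Finite 0.
Proof.
  intros Hs Hcov. apply hausdorff_measure_null_of_covers. intros delta eps Hdelta Heps.
  destruct (Hcov delta eps Hdelta Heps) as [Lf [V [w [Hw [Hsum [HV HE]]]]]].
  set (U := fun i => if canonical_index Lf i
                     then V (fst (decode_index Lf i)) (snd (decode_index Lf i))
                     else fun _ => False).
  assert (HU : forall i, Rbar_le (diam (U i)) (Finite delta) /\
                         diam_pow s (U i) <= index_weight Lf w i).
  { intros i. unfold U, index_weight. destruct canonical_index; [apply HV|].
    apply diam_bounds_of_witness; auto; [lra|]. intros x0 []. }
  exists U. split; [intros i; apply HU|]. split.
  - intros x Hx. destruct (HE x Hx) as [N [l [Hl HVx]]].
    destruct (decode_index_surj Lf N l Hl) as [i [Hc Hi]].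
    exists i. unfold U. now rewrite Hc, Hi.
  - intros K. apply Rle_trans with (sum_f_R0 (index_weight Lf w) K).
    + apply sum_Rle. intros i _. apply HU.
    + now apply sum_index_weight_le.
Qed.

(** * Power sums *)

Definition npow (x : nat) (e : R) : R := Rpower (INR x) e.

Lemma npow_pos x e : 0 < npow x e.
Proof. apply exp_pos. Qed.

Lemma Rpower_opp_antitone x y c : 0 < x <= y -> 0 <= c -> Rpower y (- c) <= Rpower x (- c).
Proof.
  intros Hxy Hc. rewrite !Rpower_Ropp. apply Rinv_le_contravar; [apply exp_pos|].
  now apply Rle_Rpower_l.
Qed.

Lemma Rpower_opp_le_1 x c : 1 <= x -> 0 <= c -> Rpower x (- c) <= 1.
Proof. intros Hx Hc. rewrite <- (Rpower_1_l (- c)). apply Rpower_opp_antitone; lra. Qed.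

Lemma Rpower_opp_2 x : 0 < x -> Rpower x (-2) = / x ^ 2.
Proof.
  intros Hx. replace (-2) with (- INR 2) by (simpl; ring).
  now rewrite Rpower_Ropp, Rpower_pow.
Qed.

Lemma npow_pow a r g : (1 <= a)%nat -> npow a r ^ g = npow a (r * INR g).
Proof. intros Ha. unfold npow. now rewrite <- Rpower_mult, Rpower_pow by apply exp_pos. Qed.

Definition inv_pow (t : R) (x : nat) : R := if (1 <=? x)%nat then npow x (- t) else 0.

Definition inv_pow_below (t : R) (a x : nat) : R := if (x <? a)%nat then inv_pow t x else 0.

Definition inv_sq (d : nat) : R := if (1 <=? d)%nat then / INR d ^ 2 else 0.

Lemma inv_pow_nonneg t x : 0 <= inv_pow t x.
Proof. unfold inv_pow. destruct (1 <=? x)%nat; [left; apply npow_pos|lra]. Qed.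

Lemma inv_pow_below_nonneg t a x : 0 <= inv_pow_below t a x.
Proof. unfold inv_pow_below. destruct (x <? a)%nat; [apply inv_pow_nonneg|lra]. Qed.

Lemma inv_sq_nonneg d : 0 <= inv_sq d.
Proof.
  unfold inv_sq. destruct (1 <=? d)%nat eqn:Hd; [|lra]. apply Nat.leb_le in Hd.
  left. apply Rinv_0_lt_compat, pow_lt, lt_0_INR. lia.
Qed.

(* Mean value theorem: (n+1)^-t is at most the increment of x^(1-t)/(1-t) on [n, n+1]. *)
Lemma npow_opp_le_increment t n : 0 < t < 1 -> (1 <= n)%nat ->
  npow (S n) (- t) <= / (1 - t) * (npow (S n) (1 - t) - npow n (1 - t)).
Proof.
  intros Ht Hn. unfold npow.
  assert (HnR : 1 <= INR n) by (apply (le_INR 1); auto).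
  rewrite S_INR.
  destruct (MVT_cor2 (fun x => Rpower x (1 - t)) (fun x => (1 - t) * Rpower x (1 - t - 1))
              (INR n) (INR n + 1) ltac:(lra)) as [c [Hc1 Hc2]].
  { intros c Hc. apply derivable_pt_lim_power. lra. }
  rewrite Hc1. replace (1 - t - 1) with (- t) by ring.
  replace (/ (1 - t) * ((1 - t) * Rpower c (- t) * (INR n + 1 - INR n))) with (Rpower c (- t))
    by (field; lra).
  apply Rpower_opp_antitone; lra.
Qed.

Lemma sum_inv_pow_le t n : 0 < t < 1 -> (1 <= n)%nat ->
  sumR (inv_pow t) (S n) <= / (1 - t) * npow n (1 - t).
Proof.
  intros Ht Hn. induction n as [|n IH]; [lia|].
  assert (HC : 1 <= / (1 - t)) by (rewrite <- Rinv_1; apply Rinv_le_contravar; lra).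
  destruct (Nat.eq_dec n 0) as [->|Hn0].
  - unfold sumR, inv_pow, npow. simpl. rewrite !Rpower_1_l. lra.
  - specialize (IH ltac:(lia)). cbn [sumR] in *.
    replace (inv_pow t (S n)) with (npow (S n) (- t))
      by (unfold inv_pow; now replace (1 <=? S n)%nat with true by (symmetry; apply Nat.leb_le; lia)).
    pose proof (npow_opp_le_increment t n Ht ltac:(lia)). lra.
Qed.

Lemma sum_inv_pow_below_le t a M : 0 < t < 1 -> (1 <= a)%nat ->
  sumR (inv_pow_below t a) M <= / (1 - t) * npow a (1 - t).
Proof.
  intros Ht Ha.
  assert (HC : 0 < / (1 - t)) by (apply Rinv_0_lt_compat; lra).
  apply Rle_trans with (sumR (inv_pow_below t a) a).
  { apply sumR_le_of_vanish; [apply inv_pow_below_nonneg|].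
    intros x Hx. unfold inv_pow_below. now replace (x <? a)%nat with false
      by (symmetry; apply Nat.ltb_ge; auto). }
  destruct a as [|a]; [lia|].
  rewrite (sumR_ext _ (inv_pow t))
    by (intros x Hx; unfold inv_pow_below; now replace (x <? S a)%nat with true
          by (symmetry; apply Nat.ltb_lt; auto)).
  destruct (Nat.eq_dec a 0) as [->|Ha0].
  - unfold sumR, inv_pow. simpl. pose proof (npow_pos 1 (1 - t)). nra.
  - apply Rle_trans with (/ (1 - t) * npow a (1 - t)); [apply sum_inv_pow_le; auto; lia|].
    apply Rmult_le_compat_l; [lra|].
    apply Rle_Rpower_l; [lra|]. split; [apply lt_0_INR; lia|apply le_INR; lia].
Qed.

Lemma sum_inv_sq_le M : sumR inv_sq (S M) <= 2.
Proof.
  assert (H : forall M, (1 <= M)%nat -> sumR inv_sq (S M) <= 2 - / INR M).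
  { intros M0 HM. induction M0 as [|M0 IH]; [lia|].
    destruct (Nat.eq_dec M0 0) as [->|HM0]; [unfold inv_sq; simpl; lra|].
    specialize (IH ltac:(lia)). cbn [sumR] in *.
    replace (inv_sq (S M0)) with (/ INR (S M0) ^ 2)
      by (unfold inv_sq; now replace (1 <=? S M0)%nat with true by (symmetry; apply Nat.leb_le; lia)).
    assert (HM1 : 1 <= INR M0) by (apply (le_INR 1); lia). rewrite S_INR.
    assert (/ (INR M0 + 1) ^ 2 <= / INR M0 - / (INR M0 + 1)).
    { replace (/ INR M0 - / (INR M0 + 1)) with (/ (INR M0 * (INR M0 + 1))) by (field; lra).
      apply Rinv_le_contravar; nra. }
    lra. }
  destruct M; [unfold inv_sq; simpl; lra|].
  specialize (H (S M) ltac:(lia)).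
  assert (0 < / INR (S M)) by (apply Rinv_0_lt_compat, lt_0_INR; lia). lra.
Qed.

(* The word [a; d; x_1; ...; x_g] describes one stage of a point of [G]: the first digit
   [a] of an arithmetic block of length [m], its common difference [d], and the [g]
   digits preceding the block, all smaller than [a]. *)
Definition stage_weight (t : R) (m : nat) (l : list nat) : R :=
  match l with
  | a :: d :: xs =>
      (if ((m <=? a) && (1 <=? d))%nat then npow (a + d) (- (t * (INR m - 1))) else 0)
      * prod_list (inv_pow_below t a) xs
  | _ => 0
  end.

Lemma stage_weight_nonneg t m l : 0 <= stage_weight t m l.
Proof.
  destruct l as [|a [|d xs]]; simpl; try lra.
  apply Rmult_le_pos; [destruct andb; [left; apply npow_pos|lra]|].
  apply prod_list_nonneg, inv_pow_below_nonneg.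
Qed.

Lemma npow_opp_add_le a d e : (1 <= a)%nat -> (1 <= d)%nat -> 2 <= e ->
  npow (a + d) (- e) <= npow a (- (e - 2)) * inv_sq d.
Proof.
  intros Ha Hd He. unfold npow, inv_sq.
  replace (1 <=? d)%nat with true by (symmetry; apply Nat.leb_le; lia).
  assert (HaR : 1 <= INR a) by (apply (le_INR 1); auto).
  assert (HdR : 1 <= INR d) by (apply (le_INR 1); auto).
  rewrite plus_INR. replace (- e) with (- (e - 2) + -2) by ring. rewrite Rpower_plus.
  apply Rmult_le_compat; try (left; apply exp_pos).
  - apply Rpower_opp_antitone; lra.
  - rewrite Rpower_opp_2 by lra. apply Rinv_le_contravar; nra.
Qed.

Lemma npow_opp_le_inv_sq a m E : (1 <= m)%nat -> (m <= a)%nat -> 0 <= E ->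
  npow a (- (E + 2)) <= npow m (- E) * inv_sq a.
Proof.
  intros Hm Ha HE. unfold npow, inv_sq.
  replace (1 <=? a)%nat with true by (symmetry; apply Nat.leb_le; lia).
  assert (HmR : 1 <= INR m) by (apply (le_INR 1); auto).
  assert (HaR : INR m <= INR a) by (apply le_INR; auto).
  replace (- (E + 2)) with (- E + -2) by ring. rewrite Rpower_plus.
  apply Rmult_le_compat; try (left; apply exp_pos).
  - apply Rpower_opp_antitone; lra.
  - rewrite Rpower_opp_2 by lra. lra.
Qed.

Lemma sum_stage_weight_head_le t m g M a : 0 < t < 1 -> (m <= a)%nat -> 2 <= t * (INR m - 1) ->
  sum_words (S g) M (fun l => stage_weight t m (a :: l)) <=
    2 * npow a (- (t * (INR m - 1) - 2)) * (/ (1 - t) * npow a (1 - t)) ^ g.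
Proof.
  intros Ht Hma He. set (e := t * (INR m - 1)) in *.
  assert (Ha1 : (1 <= a)%nat).
  { destruct a; [|lia]. assert (m = 0%nat) by lia. subst m. unfold e in He. simpl in He. lra. }
  set (P := (/ (1 - t) * npow a (1 - t)) ^ g).
  assert (HP : 0 <= P) by (apply pow_le; apply Rmult_le_pos; [apply Rlt_le, Rinv_0_lt_compat; lra|apply Rlt_le, npow_pos]).
  assert (Hgap : sumR (inv_pow_below t a) (S M) ^ g <= P).
  { apply pow_incr. split; [apply sumR_nonneg; intros; apply inv_pow_below_nonneg|].
    now apply sum_inv_pow_below_le. }
  rewrite sum_words_S. unfold stage_weight.
  replace (m <=? a)%nat with true by (symmetry; now apply Nat.leb_le).
  rewrite (sumR_ext _ (fun d => (if (1 <=? d)%nat then npow (a + d) (- e) else 0) *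
                                 sumR (inv_pow_below t a) (S M) ^ g))
    by (intros d _; now rewrite sum_words_scal, sum_words_prod_list).
  apply Rle_trans with (sumR (fun d => npow a (- (e - 2)) * P * inv_sq d) (S M)).
  - apply sumR_le. intros d _. destruct (1 <=? d)%nat eqn:Hd.
    + apply Nat.leb_le in Hd.
      pose proof (npow_opp_add_le a d e Ha1 Hd He).
      pose proof (npow_pos (a + d) (- e)). pose proof (inv_sq_nonneg d).
      apply Rle_trans with (npow a (- (e - 2)) * inv_sq d * P); [|lra].
      apply Rmult_le_compat; try lra. apply pow_le, sumR_nonneg. intros; apply inv_pow_below_nonneg.
    + rewrite Rmult_0_l. pose proof (npow_pos a (- (e - 2))). pose proof (inv_sq_nonneg d).
      apply Rmult_le_pos; [apply Rmult_le_pos|]; lra.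
  - rewrite sumR_scal. pose proof (sum_inv_sq_le M).
    assert (0 <= npow a (- (e - 2)) * P) by (pose proof (npow_pos a (- (e - 2))); nra).
    fold P. nra.
Qed.

Lemma sum_stage_weight_le t m g M : 0 < t < 1 -> (1 <= m)%nat ->
  0 <= t * (INR m - 1) - 4 - (1 - t) * INR g ->
  sum_words (2 + g) M (stage_weight t m) <=
    4 * (/ (1 - t)) ^ g * npow m (- (t * (INR m - 1) - 4 - (1 - t) * INR g)).
Proof.
  intros Ht Hm HE.
  set (E := t * (INR m - 1) - 4 - (1 - t) * INR g) in *.
  set (C := / (1 - t)).
  assert (HC : 0 <= C ^ g) by (apply pow_le; unfold C; apply Rlt_le, Rinv_0_lt_compat; lra).
  assert (HK : 0 <= 2 * C ^ g * npow m (- E)) by (pose proof (npow_pos m (- E)); nra).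
  assert (He : 2 <= t * (INR m - 1)) by (pose proof (pos_INR g); unfold E in HE; nra).
  change (2 + g)%nat with (S (S g)). rewrite sum_words_S.
  apply Rle_trans with (sumR (fun a => 2 * C ^ g * npow m (- E) * inv_sq a) (S M)).
  2: { rewrite sumR_scal. pose proof (sum_inv_sq_le M). nra. }
  apply sumR_le. intros a _. destruct (le_lt_dec m a) as [Hma|Ham].
  - eapply Rle_trans; [now apply sum_stage_weight_head_le|].
    assert (Hpow : npow a (- (t * (INR m - 1) - 2)) * (C * npow a (1 - t)) ^ g =
                   C ^ g * npow a (- (E + 2))).
    { rewrite Rpow_mult_distr, npow_pow by lia. unfold npow.
      replace (- (E + 2)) with (- (t * (INR m - 1) - 2) + (1 - t) * INR g) by (unfold E; ring).
      rewrite Rpower_plus. ring. }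
    fold C. rewrite Rmult_assoc, Hpow.
    pose proof (npow_opp_le_inv_sq a m E Hm Hma HE). pose proof (npow_pos a (- (E + 2))). nra.
  - rewrite (sum_words_ext _ _ _ (fun l => 0 * stage_weight t m l)).
    + rewrite sum_words_scal, Rmult_0_l. pose proof (inv_sq_nonneg a). nra.
    + intros [|d xs] _; simpl; [ring|].
      replace (m <=? a)%nat with false by (symmetry; apply Nat.leb_gt; lia). simpl. ring.
Qed.

Lemma ln_le_compat x y : 0 < x <= y -> ln x <= ln y.
Proof. intros [H1 [H2|H2]]; [left; now apply ln_increasing|subst; lra]. Qed.

Lemma exp_le_compat x y : x <= y -> exp x <= exp y.
Proof. intros [H|H]; [left; now apply exp_increasing|subst; lra]. Qed.

Lemma le_div_mul a b c : 0 < c -> a / c <= b -> a <= c * b.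
Proof.
  intros Hc H. apply (Rmult_le_compat_l c) in H; [|lra].
  replace (c * (a / c)) with a in H by (field; lra). exact H.
Qed.

Lemma eventually_dominates kap c K : 0 < kap ->
  exists Th, forall x, Th <= x -> 2 <= x /\ c <= kap * (x - 1) /\ K <= kap * ln x.
Proof.
  intros Hk. exists (Rmax 2 (Rmax (1 + c / kap) (exp (K / kap)))). intros x Hx.
  pose proof (Rmax_l 2 (Rmax (1 + c / kap) (exp (K / kap)))).
  pose proof (Rmax_r 2 (Rmax (1 + c / kap) (exp (K / kap)))).
  pose proof (Rmax_l (1 + c / kap) (exp (K / kap))).
  pose proof (Rmax_r (1 + c / kap) (exp (K / kap))).
  repeat split; [lra|apply le_div_mul; lra|].
  apply le_div_mul; [exact Hk|]. rewrite <- (ln_exp (K / kap)).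
  apply ln_le_compat. split; [apply exp_pos|lra].
Qed.

(* With g <= gam (m - 1) + A0, the exponent of m in [sum_stage_weight_le] grows like
   kap (m - 1) for kap = t - (1 - t) gam > 0, and kap (m - 1) ln m beats the factor
   (1 - t)^-g. *)
Lemma stage_bound_eventually_le t gam A0 X : 0 < t < 1 -> 0 <= gam -> 0 <= A0 ->
  0 < t - (1 - t) * gam ->
  exists Th, forall m g, Th <= INR m -> INR g <= gam * (INR m - 1) + A0 ->
    2 <= INR m /\ 0 <= t * (INR m - 1) - 4 - (1 - t) * INR g /\
    4 * (/ (1 - t)) ^ g * npow m (- (t * (INR m - 1) - 4 - (1 - t) * INR g)) <= exp (- X).
Proof.
  intros Ht Hg HA Hk.
  set (kap := t - (1 - t) * gam) in *.
  set (C := / (1 - t)).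
  assert (HC : 1 <= C) by (unfold C; rewrite <- Rinv_1; apply Rinv_le_contravar; lra).
  set (lC := ln C).
  assert (HlC : 0 <= lC) by (unfold lC; rewrite <- ln_1; apply ln_le_compat; lra).
  set (K1 := ln 4 + A0 * lC).
  set (K2 := 4 + (1 - t) * A0).
  destruct (eventually_dominates kap (4 * K2) (Rmax (2 * gam * lC) (4 * (K1 + X))) Hk)
    as [Th HTh].
  exists Th. intros m g Hm Hgm.
  destruct (HTh (INR m) Hm) as [Hm2 [Hu HL]].
  pose proof (Rmax_l (2 * gam * lC) (4 * (K1 + X))).
  pose proof (Rmax_r (2 * gam * lC) (4 * (K1 + X))).
  set (u := INR m - 1) in *. set (L := ln (INR m)) in *.
  assert (Hu1 : 1 <= u) by (unfold u; lra).
  assert (HL0 : 0 <= L) by (unfold L; rewrite <- ln_1; apply ln_le_compat; lra).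
  assert (Hg1 : (1 - t) * INR g <= (1 - t) * (gam * u + A0)) by (apply Rmult_le_compat_l; lra).
  assert (HK2 : 4 <= K2) by (unfold K2; nra).
  assert (HE : kap * u - K2 <= t * u - 4 - (1 - t) * INR g) by (unfold kap, K2; lra).
  repeat split; [lra|lra|].
  set (E := t * u - 4 - (1 - t) * INR g) in *.
  replace 4 with (exp (ln 4)) at 1 by (apply exp_ln; lra).
  rewrite <- (Rpower_pow g C) by lra. unfold npow, Rpower. fold L lC.
  rewrite <- !exp_plus. apply exp_le_compat.
  assert (Hg2 : INR g * lC <= (gam * u + A0) * lC) by (apply Rmult_le_compat_r; lra).
  assert (HEL : - E * L <= - (kap * u - K2) * L) by (apply Rmult_le_compat_r; lra).
  assert (HgLu : 2 * gam * lC * u <= kap * L * u) by (apply Rmult_le_compat_r; lra).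
  assert (HK2L : 4 * K2 * L <= kap * u * L) by (apply Rmult_le_compat_r; lra).
  assert (HLu : kap * L * 1 <= kap * L * u) by (apply Rmult_le_compat_l; nra).
  unfold K1 in *. nra.
Qed.

Lemma sum_stage_weight_eventually_le t gam A0 X : 0 < t < 1 -> 0 <= gam -> 0 <= A0 ->
  0 < t - (1 - t) * gam ->
  exists Th, forall m g M, Th <= INR m -> INR g <= gam * (INR m - 1) + A0 ->
    sum_words (2 + g) M (stage_weight t m) <= exp (- X).
Proof.
  intros Ht Hg HA Hk. destruct (stage_bound_eventually_le t gam A0 X Ht Hg HA Hk) as [Th HTh].
  exists Th. intros m g M Hm Hgm. destruct (HTh m g Hm Hgm) as [Hm2 [HE Hsmall]].
  eapply Rle_trans; [apply sum_stage_weight_le; auto|exact Hsmall].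
  destruct m; [simpl in Hm2; lra|lia].
Qed.

(** * Digits of points of J *)

Lemma J_set_digit_1 x : J_set x -> (1 <= cf_a 1 x)%nat.
Proof. intros [Hx _]. rewrite cf_a_1. destruct (gauss_spec x Hx) as [H _]. lia. Qed.

Lemma J_set_digit_lt x i j : J_set x -> (1 <= i)%nat -> (i < j)%nat -> (cf_a i x < cf_a j x)%nat.
Proof.
  intros HJ Hi Hij. destruct HJ as [_ [_ Hinc]]. induction Hij; [now apply Hinc|].
  specialize (Hinc m ltac:(lia)). lia.
Qed.

Lemma J_set_digit_le x i j : J_set x -> (1 <= i)%nat -> (i <= j)%nat -> (cf_a i x <= cf_a j x)%nat.
Proof.
  intros HJ Hi Hij. destruct (Nat.eq_dec i j) as [->|Hne]; [lia|].
  pose proof (J_set_digit_lt x i j HJ Hi ltac:(lia)). lia.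
Qed.

Lemma J_set_index_le_digit x j : J_set x -> (1 <= j)%nat -> (j <= cf_a j x)%nat.
Proof.
  intros HJ Hj. induction Hj; [now apply J_set_digit_1|].
  pose proof (J_set_digit_lt x m (S m) HJ Hj ltac:(lia)). lia.
Qed.

(* [cf_a 0] coincides with [cf_a 1]. *)
Lemma J_set_digit_pos x j : J_set x -> (1 <= cf_a j x)%nat.
Proof.
  intros HJ. destruct j; [now apply J_set_digit_1|].
  pose proof (J_set_index_le_digit x (S j) HJ ltac:(lia)). lia.
Qed.

Lemma J_set_inv_sq_digit_pos x j : J_set x -> 0 < / INR (cf_a j x) ^ 2.
Proof.
  intros HJ. apply Rinv_0_lt_compat, pow_lt, lt_0_INR.
  pose proof (J_set_digit_pos x j HJ). lia.
Qed.

Fixpoint digits (x : R) (k L : nat) : list nat :=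
  match L with O => [] | S L' => cf_a k x :: digits x (S k) L' end.

Lemma digits_length x k L : length (digits x k L) = L.
Proof. revert k; induction L; intros k; simpl; auto. Qed.

Definition agree (x y : R) (k L : nat) : Prop :=
  forall j, (k <= j < k + L)%nat -> cf_a j x = cf_a j y.

Lemma digits_agree x y k L : digits x k L = digits y k L -> agree x y k L.
Proof.
  revert k; induction L; intros k H j Hj; [lia|].
  simpl in H. injection H as H1 H2.
  destruct (Nat.eq_dec j k) as [->|Hjk]; auto. apply (IHL (S k)); auto. lia.
Qed.

Lemma agree_app x y k L1 L2 : agree x y k L1 -> agree x y (k + L1) L2 -> agree x y k (L1 + L2).
Proof. intros H1 H2 j Hj. destruct (le_lt_dec (k + L1) j); [apply H2|apply H1]; lia. Qed.

Definition digit_weight (t x : R) (j : nat) : R := npow (cf_a j x) (- t).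

Lemma digit_weight_unit t x j : 0 < t -> J_set x -> (1 <= j)%nat -> 0 <= digit_weight t x j <= 1.
Proof.
  intros Ht HJ Hj. split; [left; apply npow_pos|].
  apply Rpower_opp_le_1; [|lra]. apply (le_INR 1). pose proof (J_set_digit_pos x j HJ). lia.
Qed.

Lemma prod_digit_weight_unit t x k L : 0 < t -> J_set x -> (1 <= k)%nat ->
  0 <= prod_range (digit_weight t x) k L <= 1.
Proof. intros Ht HJ Hk. apply prod_range_unit. intros j Hj. apply digit_weight_unit; auto; lia. Qed.

Lemma prod_digit_weight_nonneg t x k L : 0 < t -> J_set x -> (1 <= k)%nat ->
  0 <= prod_range (digit_weight t x) k L.
Proof. intros. now apply prod_digit_weight_unit. Qed.

(* All but the first digit of the block are at least [a_(k+1)]. *)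
Lemma prod_digit_weight_block_le t x k m : 0 < t -> J_set x -> (1 <= k)%nat -> (1 <= m)%nat ->
  prod_range (digit_weight t x) k m <= npow (cf_a (S k) x) (- (t * (INR m - 1))).
Proof.
  intros Ht HJ Hk Hm. destruct m as [|m]; [lia|]. clear Hm. simpl prod_range.
  assert (Ha : (1 <= cf_a (S k) x)%nat) by apply J_set_digit_pos, HJ.
  assert (Htail : forall j, (S k <= j)%nat ->
            prod_range (digit_weight t x) j m <= npow (cf_a (S k) x) (- t) ^ m).
  { induction m; intros j Hj; simpl; [lra|].
    apply Rmult_le_compat; [left; apply npow_pos|apply prod_digit_weight_nonneg; auto; lia| |].
    - unfold digit_weight, npow. apply Rpower_opp_antitone; [|lra]. split.
      + apply lt_0_INR. lia.
      + apply le_INR, J_set_digit_le; auto; lia.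
    - apply IHm. lia. }
  specialize (Htail (S k) (le_n _)). rewrite npow_pow in Htail by exact Ha.
  rewrite S_INR. replace (- (t * (INR m + 1 - 1))) with (- t * INR m) by ring.
  pose proof (digit_weight_unit t x k Ht HJ Hk).
  pose proof (prod_digit_weight_unit t x (S k) m Ht HJ ltac:(lia)). nra.
Qed.

Lemma prod_list_digits t x a k L :
  (forall j, (k <= j < k + L)%nat -> (1 <= cf_a j x < a)%nat) ->
  prod_list (inv_pow_below t a) (digits x k L) = prod_range (digit_weight t x) k L.
Proof.
  revert k; induction L; intros k H; simpl; auto.
  rewrite IHL by (intros; apply H; lia). f_equal.
  specialize (H k ltac:(lia)). unfold inv_pow_below, inv_pow, digit_weight.
  replace (cf_a k x <? a)%nat with true by (symmetry; apply Nat.ltb_lt; lia).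
  now replace (1 <=? cf_a k x)%nat with true by (symmetry; apply Nat.leb_le; lia).
Qed.

Lemma Rpower_prod_inv_sq_digits t x L : J_set x ->
  Rpower (prod_range (fun j => / INR (cf_a j x) ^ 2) 1 L) (t / 2) =
  prod_range (digit_weight t x) 1 L.
Proof.
  intros HJ. rewrite Rpower_prod_range by (intros; now apply J_set_inv_sq_digit_pos).
  apply prod_range_ext. intros j _. unfold digit_weight, npow.
  assert (0 < INR (cf_a j x)) by (apply lt_0_INR; pose proof (J_set_digit_pos x j HJ); lia).
  rewrite <- Rpower_opp_2, Rpower_mult by auto. f_equal. field.
Qed.

(** * Coding points of G by words *)

(* A list of stages [(m, g)], each coded by a word of length [2 + g] as in [stage_weight]. *)
Fixpoint stages_len (ms : list (nat * nat)) : nat :=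
  match ms with [] => O | (m, g) :: ms' => (2 + g + stages_len ms')%nat end.

Fixpoint stages_weight (t : R) (ms : list (nat * nat)) (l : list nat) : R :=
  match ms with
  | [] => 1
  | (m, g) :: ms' => stage_weight t m (firstn (2 + g) l) * stages_weight t ms' (skipn (2 + g) l)
  end.

Lemma stages_weight_nonneg t ms l : 0 <= stages_weight t ms l.
Proof.
  revert l; induction ms as [|[m g] ms IH]; intros l; simpl; [lra|].
  apply Rmult_le_pos; [apply stage_weight_nonneg|apply IH].
Qed.

Lemma stages_weight_cons t m g ms w rest : length w = (2 + g)%nat ->
  stages_weight t ((m, g) :: ms) (w ++ rest) = stage_weight t m w * stages_weight t ms rest.
Proof.
  intros H. cbn [stages_weight]. rewrite firstn_app, skipn_app, firstn_all2, skipn_all2 by lia.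
  replace (2 + g - length w)%nat with 0%nat by lia.
  now rewrite firstn_O, skipn_O, app_nil_r.
Qed.

Lemma sum_words_stages_weight_cons t m g ms M :
  sum_words (stages_len ((m, g) :: ms)) M (stages_weight t ((m, g) :: ms)) =
  sum_words (2 + g) M (stage_weight t m) * sum_words (stages_len ms) M (stages_weight t ms).
Proof.
  change (stages_len ((m, g) :: ms)) with ((2 + g) + stages_len ms)%nat.
  rewrite sum_words_app, Rmult_comm, <- sum_words_scal. apply sum_words_ext. intros w Hw.
  rewrite Rmult_comm, <- sum_words_scal. apply sum_words_ext. intros rest _.
  now apply stages_weight_cons.
Qed.

Lemma sum_words_stages_weight_le_1 t ms M :
  (forall m g, In (m, g) ms -> sum_words (2 + g) M (stage_weight t m) <= 1) ->
  sum_words (stages_len ms) M (stages_weight t ms) <= 1.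
Proof.
  induction ms as [|[m g] ms IH]; intros H; [simpl; lra|].
  rewrite sum_words_stages_weight_cons.
  assert (H1 := H m g (in_eq _ _)).
  assert (H2 := IH (fun m' g' Hin => H m' g' (in_cons _ _ _ Hin))).
  pose proof (sum_words_nonneg (2 + g) M _ (stage_weight_nonneg t m)).
  pose proof (sum_words_nonneg (stages_len ms) M _ (stages_weight_nonneg t ms)).
  nra.
Qed.

Lemma app_inj_length {A} (l1 l2 l1' l2' : list A) :
  l1 ++ l2 = l1' ++ l2' -> length l1 = length l1' -> l1 = l1' /\ l2 = l2'.
Proof.
  revert l1'. induction l1 as [|a l1 IH]; intros [|b l1'] H Hl; simpl in *;
    try discriminate; auto.
  injection H as -> H. destruct (IH l1' H ltac:(lia)) as [-> ->]. auto.
Qed.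

Lemma AP_block_agree x y k m : is_AP_block x k m -> is_AP_block y k m -> (2 <= m)%nat ->
  cf_a k x = cf_a k y -> cf_a (S k) x = cf_a (S k) y -> agree x y k m.
Proof.
  intros [dx Hx] [dy Hy] Hm H0 H1 j Hj.
  pose proof (Hx 1%nat ltac:(lia)) as Hx1. pose proof (Hy 1%nat ltac:(lia)) as Hy1.
  rewrite Nat.add_1_r, H1, H0 in Hx1. rewrite Nat.add_1_r in Hy1.
  assert (dx = dy) by lia. subst dy.
  pose proof (Hx (j - k)%nat ltac:(lia)) as Hxj. pose proof (Hy (j - k)%nat ltac:(lia)) as Hyj.
  replace (k + (j - k))%nat with j in Hxj, Hyj by lia.
  rewrite H0 in Hxj. apply Nat2Z.inj. lia.
Qed.

Section Coding.

Variable sigma : nat -> nat.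
Hypothesis sigma_pos : forall n, (1 <= n)%nat -> (0 < sigma n)%nat.
Hypothesis sigma_gap : forall n, (1 <= n)%nat -> (sigma n + n <= sigma (S n))%nat.

Definition block_end (n : nat) : nat := (sigma n + n - 1)%nat.

(* The number of digits strictly between block [m - 1] and block [m]. *)
Definition gap (m : nat) : nat := (sigma m - sigma (pred m) - pred m)%nat.

Lemma index_le_sigma m : (1 <= m)%nat -> (m <= sigma m)%nat.
Proof.
  intros Hm. induction Hm; [specialize (sigma_pos 1%nat (le_n 1)); lia|].
  specialize (sigma_gap m Hm). lia.
Qed.

Lemma gap_spec m : (2 <= m)%nat ->
  S (block_end (pred m)) = (sigma (pred m) + pred m)%nat /\
  (sigma (pred m) + pred m + gap m = sigma m)%nat.
Proof.
  intros Hm. unfold block_end, gap. destruct m as [|m]; [lia|]. simpl pred.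
  specialize (sigma_gap m ltac:(lia)). specialize (sigma_pos m ltac:(lia)). lia.
Qed.

Lemma block_end_succ m : (2 <= m)%nat -> block_end m = (block_end (pred m) + gap m + m)%nat.
Proof.
  intros Hm. destruct (gap_spec m Hm) as [E1 E2]. unfold block_end in *.
  pose proof (index_le_sigma m ltac:(lia)). lia.
Qed.

Lemma block_end_mono N k : (1 <= N)%nat -> (block_end N <= block_end (N + k))%nat.
Proof.
  intros HN. induction k; [rewrite Nat.add_0_r; lia|].
  rewrite (block_end_succ (N + S k)) by lia. replace (pred (N + S k)) with (N + k)%nat by lia. lia.
Qed.

Fixpoint mid_stages (N k : nat) : list (nat * nat) :=
  match k with O => [] | S k' => (N + S k', gap (N + S k')) :: mid_stages N k' end%nat.

(* The top stage also carries the [block_end N] digits preceding block [N + 1]. *)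
Definition stages (N k : nat) : list (nat * nat) :=
  ((N + S k)%nat, (gap (N + S k) + block_end N)%nat) :: mid_stages N k.

Lemma in_mid_stages N k m g : In (m, g) (mid_stages N k) -> (N < m)%nat /\ g = gap m.
Proof.
  induction k; simpl; intros H; [contradiction|].
  destruct H as [H|H]; [injection H as <- <-; split; auto; lia|]. now apply IHk.
Qed.

Definition stage_code (x : R) (m : nat) (e : list nat) : list nat :=
  cf_a (sigma m) x :: (cf_a (S (sigma m)) x - cf_a (sigma m) x)%nat ::
  (e ++ digits x (sigma (pred m) + pred m) (gap m)).

Fixpoint mid_code (x : R) (N k : nat) : list nat :=
  match k with O => [] | S k' => stage_code x (N + S k') [] ++ mid_code x N k' end%nat.

Definition code (x : R) (N k : nat) : list nat :=
  stage_code x (N + S k) (digits x 1 (block_end N)) ++ mid_code x N k.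

Lemma stage_code_length x m e : length (stage_code x m e) = (2 + (length e + gap m))%nat.
Proof. unfold stage_code. simpl. now rewrite length_app, digits_length. Qed.

Lemma mid_code_length x N k : length (mid_code x N k) = stages_len (mid_stages N k).
Proof.
  induction k; auto. cbn [mid_code mid_stages stages_len].
  rewrite length_app, stage_code_length, IHk. simpl. lia.
Qed.

Lemma code_length x N k : length (code x N k) = stages_len (stages N k).
Proof.
  unfold code, stages. rewrite length_app, stage_code_length, mid_code_length, digits_length.
  simpl. lia.
Qed.

Lemma block_end_split N k : (1 <= N)%nat ->
  (block_end (N + S k) - block_end N =
     (block_end (N + k) - block_end N) + gap (N + S k) + (N + S k))%nat /\
  (S (block_end N) + (block_end (N + k) - block_end N) = sigma (N + k) + (N + k))%nat /\
  (sigma (N + k) + (N + k) + gap (N + S k) = sigma (N + S k))%nat.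
Proof.
  intros HN. pose proof (block_end_mono N k HN).
  pose proof (block_end_succ (N + S k) ltac:(lia)) as Hsucc.
  destruct (gap_spec (N + S k) ltac:(lia)) as [E1 E2].
  replace (pred (N + S k)) with (N + k)%nat in * by lia. lia.
Qed.

Lemma prod_range_split_stage f N k : (1 <= N)%nat ->
  prod_range f (S (block_end N)) (block_end (N + S k) - block_end N) =
  prod_range f (S (block_end N)) (block_end (N + k) - block_end N) *
  prod_range f (sigma (N + k) + (N + k)) (gap (N + S k)) *
  prod_range f (sigma (N + S k)) (N + S k).
Proof.
  intros HN. destruct (block_end_split N k HN) as [E1 [E2 E3]].
  rewrite E1, !prod_range_app.
  replace (S (block_end N) + (block_end (N + k) - block_end N + gap (N + S k)))%nat
    with (sigma (N + S k)) by lia.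
  now rewrite E2.
Qed.

Lemma agree_split_stage x y N k : (1 <= N)%nat ->
  agree x y (S (block_end N)) (block_end (N + k) - block_end N) ->
  agree x y (sigma (N + k) + (N + k)) (gap (N + S k)) ->
  agree x y (sigma (N + S k)) (N + S k) ->
  agree x y (S (block_end N)) (block_end (N + S k) - block_end N).
Proof.
  intros HN H1 H2 H3. destruct (block_end_split N k HN) as [E1 [E2 E3]].
  rewrite E1. apply agree_app; [apply agree_app; [exact H1|]|].
  - now rewrite E2.
  - replace (S (block_end N) + (block_end (N + k) - block_end N + gap (N + S k)))%nat
      with (sigma (N + S k)) by lia. exact H3.
Qed.

Lemma prod_digit_weight_le_stage_weight t x m e : 0 < t -> J_set x -> (2 <= m)%nat ->
  prod_list (inv_pow_below t (cf_a (sigma m) x)) e *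
  prod_range (digit_weight t x) (sigma (pred m) + pred m) (gap m) *
  prod_range (digit_weight t x) (sigma m) m <= stage_weight t m (stage_code x m e).
Proof.
  intros Ht HJ Hm.
  assert (Hsm : (m <= sigma m)%nat) by (apply index_le_sigma; lia).
  destruct (gap_spec m Hm) as [_ Hgap].
  set (a := cf_a (sigma m) x). set (a' := cf_a (S (sigma m)) x).
  assert (Haa : (a < a')%nat) by (apply J_set_digit_lt; auto; lia).
  assert (Hma : (m <= a)%nat) by (pose proof (J_set_index_le_digit x (sigma m) HJ ltac:(lia)); unfold a; lia).
  unfold stage_code, stage_weight. fold a a'.
  replace ((m <=? a) && (1 <=? a' - a))%nat with true
    by (symmetry; apply andb_true_intro; split; apply Nat.leb_le; lia).
  replace (a + (a' - a))%nat with a' by lia.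
  rewrite prod_list_app, (prod_list_digits t x a).
  2: { intros j Hj. split; [apply J_set_digit_pos, HJ|]. apply J_set_digit_lt; auto; lia. }
  pose proof (prod_digit_weight_block_le t x (sigma m) m Ht HJ ltac:(lia) ltac:(lia)).
  pose proof (prod_list_nonneg (inv_pow_below t a) e (inv_pow_below_nonneg t a)).
  pose proof (prod_digit_weight_nonneg t x (sigma (pred m) + pred m) (gap m) Ht HJ ltac:(lia)).
  pose proof (prod_digit_weight_nonneg t x (sigma m) m Ht HJ ltac:(lia)).
  rewrite (Rmult_comm (npow _ _)). apply Rmult_le_compat_l; [apply Rmult_le_pos|]; auto.
Qed.

Lemma prod_digit_weight_le_mid_code_weight t x N k : 0 < t -> J_set x -> (1 <= N)%nat ->
  prod_range (digit_weight t x) (S (block_end N)) (block_end (N + k) - block_end N) <=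
  stages_weight t (mid_stages N k) (mid_code x N k).
Proof.
  intros Ht HJ HN. induction k.
  { rewrite Nat.add_0_r, Nat.sub_diag. simpl. lra. }
  rewrite prod_range_split_stage by exact HN.
  cbn [mid_stages mid_code]. rewrite stages_weight_cons by (rewrite stage_code_length; simpl; lia).
  pose proof (prod_digit_weight_le_stage_weight t x (N + S k) [] Ht HJ ltac:(lia)) as Hstage.
  replace (pred (N + S k)) with (N + k)%nat in Hstage by lia.
  simpl prod_list in Hstage. rewrite Rmult_1_l in Hstage.
  pose proof (prod_digit_weight_nonneg t x (S (block_end N)) (block_end (N + k) - block_end N) Ht HJ ltac:(lia)).
  pose proof (prod_digit_weight_nonneg t x (sigma (N + k) + (N + k)) (gap (N + S k)) Ht HJ ltac:(lia)).
  pose proof (prod_digit_weight_nonneg t x (sigma (N + S k)) (N + S k) Ht HJ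
                ltac:(pose proof (index_le_sigma (N + S k)); lia)).
  pose proof (stages_weight_nonneg t (mid_stages N k) (mid_code x N k)).
  rewrite Rmult_assoc, (Rmult_comm (stage_weight _ _ _)).
  apply Rmult_le_compat; auto. apply Rmult_le_pos; auto.
Qed.

Lemma prod_digit_weight_le_code_weight t x N k : 0 < t -> J_set x -> (1 <= N)%nat ->
  prod_range (digit_weight t x) 1 (block_end (N + S k)) <=
  stages_weight t (stages N k) (code x N k).
Proof.
  intros Ht HJ HN. set (n := (N + S k)%nat).
  pose proof (block_end_mono N (S k) HN) as Hmono. fold n in Hmono.
  replace (block_end n) with (block_end N + (block_end n - block_end N))%nat by lia.
  rewrite prod_range_app. replace (1 + block_end N)%nat with (S (block_end N)) by lia.
  unfold n. rewrite prod_range_split_stage by exact HN. fold n.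
  unfold code, stages. fold n.
  rewrite stages_weight_cons by (rewrite stage_code_length, digits_length; lia).
  assert (Hhead : prod_list (inv_pow_below t (cf_a (sigma n) x)) (digits x 1 (block_end N)) =
                  prod_range (digit_weight t x) 1 (block_end N)).
  { apply prod_list_digits. intros j Hj. split; [apply J_set_digit_pos, HJ|].
    apply J_set_digit_lt; auto; [lia|].
    pose proof (block_end_split N k HN) as [_ [E2 E3]]. fold n in E3. lia. }
  pose proof (prod_digit_weight_le_stage_weight t x n (digits x 1 (block_end N)) Ht HJ
                ltac:(unfold n; lia)) as Hstage.
  replace (pred n) with (N + k)%nat in Hstage by (unfold n; lia).
  rewrite Hhead in Hstage.
  pose proof (prod_digit_weight_le_mid_code_weight t x N k Ht HJ HN) as Hmid.
  pose proof (prod_digit_weight_nonneg t x 1 (block_end N) Ht HJ (le_n 1)).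
  pose proof (prod_digit_weight_nonneg t x (S (block_end N)) (block_end (N + k) - block_end N) Ht HJ ltac:(lia)).
  pose proof (prod_digit_weight_nonneg t x (sigma (N + k) + (N + k)) (gap n) Ht HJ ltac:(lia)).
  pose proof (prod_digit_weight_nonneg t x (sigma n) n Ht HJ
                ltac:(pose proof (index_le_sigma n); unfold n in *; lia)).
  pose proof (stage_weight_nonneg t n (stage_code x n (digits x 1 (block_end N)))).
  set (h := prod_range (digit_weight t x) 1 (block_end N)) in *.
  set (mid := prod_range (digit_weight t x) (S (block_end N)) (block_end (N + k) - block_end N)) in *.
  set (gp := prod_range (digit_weight t x) (sigma (N + k) + (N + k)) (gap n)) in *.
  set (bl := prod_range (digit_weight t x) (sigma n) n) in *.
  replace (h * (mid * gp * bl)) with ((h * gp * bl) * mid) by ring.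
  apply Rmult_le_compat; auto. apply Rmult_le_pos; auto. apply Rmult_le_pos; auto.
Qed.

Definition G_from (N : nat) (x : R) : Prop :=
  J_set x /\ forall m, (1 <= m)%nat -> (N <= m)%nat -> is_AP_block x (sigma m) m.

Lemma stage_code_agree x y m e e' : J_set x -> J_set y -> (2 <= m)%nat ->
  is_AP_block x (sigma m) m -> is_AP_block y (sigma m) m -> length e = length e' ->
  stage_code x m e = stage_code y m e' ->
  e = e' /\ agree x y (sigma (pred m) + pred m) (gap m) /\ agree x y (sigma m) m.
Proof.
  intros HJx HJy Hm Hax Hay Hl H.
  unfold stage_code in H. injection H as H0 H1 H2.
  assert (Hsm : (1 <= sigma m)%nat) by (pose proof (index_le_sigma m ltac:(lia)); lia).
  pose proof (J_set_digit_lt x (sigma m) (S (sigma m)) HJx Hsm ltac:(lia)).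
  pose proof (J_set_digit_lt y (sigma m) (S (sigma m)) HJy Hsm ltac:(lia)).
  apply app_inj_length in H2 as [He Hd]; auto.
  repeat split; auto; [now apply digits_agree|].
  apply AP_block_agree; auto. lia.
Qed.

Lemma mid_code_agree x y N k : (1 <= N)%nat -> G_from N x -> G_from N y ->
  mid_code x N k = mid_code y N k ->
  agree x y (S (block_end N)) (block_end (N + k) - block_end N).
Proof.
  intros HN [HJx HGx] [HJy HGy]. induction k; intros H.
  { rewrite Nat.add_0_r, Nat.sub_diag. intros j Hj. lia. }
  cbn [mid_code] in H. apply app_inj_length in H as [Hstage Hmid];
    [|now rewrite !stage_code_length].
  destruct (stage_code_agree x y (N + S k) [] [] HJx HJy ltac:(lia)
              (HGx (N + S k)%nat ltac:(lia) ltac:(lia)) (HGy (N + S k)%nat ltac:(lia) ltac:(lia))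
              eq_refl Hstage) as [_ [Hgap Hblock]].
  replace (pred (N + S k)) with (N + k)%nat in Hgap by lia.
  apply agree_split_stage; auto.
Qed.

Lemma code_agree x y N k : (1 <= N)%nat -> G_from N x -> G_from N y ->
  code x N k = code y N k -> agree x y 1 (block_end (N + S k)).
Proof.
  intros HN Gx Gy H. pose proof Gx as [HJx HGx]. pose proof Gy as [HJy HGy].
  unfold code in H. apply app_inj_length in H as [Htop Hmid];
    [|now rewrite !stage_code_length, !digits_length].
  set (n := (N + S k)%nat) in *.
  destruct (stage_code_agree x y n _ _ HJx HJy ltac:(unfold n; lia)
              (HGx n ltac:(unfold n; lia) ltac:(unfold n; lia))
              (HGy n ltac:(unfold n; lia) ltac:(unfold n; lia))
              ltac:(now rewrite !digits_length) Htop) as [Hhead [Hgap Hblock]].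
  replace (pred n) with (N + k)%nat in Hgap by (unfold n; lia).
  apply digits_agree in Hhead.
  pose proof (block_end_mono N (S k) HN) as Hmono. fold n in Hmono.
  replace (block_end n) with (block_end N + (block_end n - block_end N))%nat by lia.
  apply agree_app; [exact Hhead|].
  replace (1 + block_end N)%nat with (S (block_end N)) by lia.
  apply agree_split_stage; auto. now apply mid_code_agree.
Qed.

End Coding.

(** * Covering G *)

Lemma prod_inv_sq_digits_le_inv_index x D j : J_set x -> (1 <= j <= D)%nat ->
  prod_range (fun i => / INR (cf_a i x) ^ 2) 1 D <= / INR j.
Proof.
  intros HJ Hj.
  assert (HjR : 1 <= INR j) by (apply (le_INR 1); lia).
  assert (Hja : INR j <= INR (cf_a j x)) by (apply le_INR, J_set_index_le_digit; auto; lia).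
  eapply Rle_trans; [apply (prod_range_le_factor _ 1 D j)|].
  - intros i _. split; [left; now apply J_set_inv_sq_digit_pos|].
    assert (1 <= INR (cf_a i x)) by (apply (le_INR 1), J_set_digit_pos, HJ).
    rewrite <- Rinv_1. apply Rinv_le_contravar; nra.
  - lia.
  - apply Rinv_le_contravar; nra.
Qed.

Lemma gap_eventually_le (sigma : nat -> nat) (beta gam : R) :
  (forall n, (1 <= n)%nat -> (sigma n + n <= sigma (S n))%nat) ->
  is_lim_seq (fun n => (INR (sigma (S n)) - INR (sigma n)) / INR n) beta ->
  beta - 1 < gam ->
  exists N1, forall m, (N1 <= m)%nat -> INR (gap sigma m) <= gam * (INR m - 1).
Proof.
  intros Hgap Hlim Hgam.
  apply is_lim_seq_spec in Hlim.
  assert (Heta : 0 < gam - (beta - 1)) by lra.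
  destruct (Hlim (mkposreal _ Heta)) as [N1 HN1]. simpl in HN1.
  exists (S (S N1)). intros [|n] Hm; [lia|].
  specialize (HN1 n ltac:(lia)). specialize (Hgap n ltac:(lia)).
  assert (HnR : 0 < INR n) by (apply lt_0_INR; lia).
  unfold gap. simpl pred. rewrite !minus_INR, S_INR by lia.
  apply Rabs_def2 in HN1 as [HN1 _].
  assert (Hq : (INR (sigma (S n)) - INR (sigma n)) / INR n * INR n
               = INR (sigma (S n)) - INR (sigma n)) by (field; lra).
  apply (Rmult_lt_compat_r (INR n)) in HN1; [|exact HnR]. lra.
Qed.

Lemma gap_stage_sum_eventually_le sigma t gam A X : 0 < t < 1 -> 0 <= gam ->
  0 < t - (1 - t) * gam ->
  (exists N1, forall m, (N1 <= m)%nat -> INR (gap sigma m) <= gam * (INR m - 1)) ->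
  exists m0, forall m M, (m0 <= m)%nat ->
    sum_words (2 + (gap sigma m + A)) M (stage_weight t m) <= exp (- X).
Proof.
  intros Ht Hg Hk [N1 HN1].
  destruct (sum_stage_weight_eventually_le t gam (INR A) X Ht Hg (pos_INR A) Hk) as [Th HTh].
  destruct (INR_unbounded Th) as [m1 Hm1].
  exists (m1 + N1)%nat. intros m M Hm. apply HTh.
  - assert (INR m1 <= INR m) by (apply le_INR; lia). lra.
  - rewrite plus_INR. specialize (HN1 m ltac:(lia)). lra.
Qed.

Section Cover.

Variable sigma : nat -> nat.
Hypothesis sigma_pos : forall n, (1 <= n)%nat -> (0 < sigma n)%nat.
Hypothesis sigma_gap : forall n, (1 <= n)%nat -> (sigma n + n <= sigma (S n))%nat.

Variables (t delta eps : R) (N0 : nat) (kf : nat -> nat).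
Hypothesis t_pos : 0 < t.
Hypothesis delta_pos : 0 < delta.
Hypothesis N0_pos : (1 <= N0)%nat.
Hypothesis mid_stages_small : forall m M, (N0 < m)%nat ->
  sum_words (2 + gap sigma m) M (stage_weight t m) <= 1.
Hypothesis top_stage_small : forall N M,
  sum_words (2 + (gap sigma (N + N0 + S (kf N)) + block_end sigma (N + N0))) M
    (stage_weight t (N + N0 + S (kf N))) <= eps / 2 ^ S N.
Hypothesis top_stage_fine : forall N, / INR (N + N0 + S (kf N)) <= delta.

(* The index [N] of a piece plays two roles: its points have progressions from block
   [N + N0] on, and the pieces with index [N] have total weight at most eps / 2^(N+1). *)
Definition piece_len (N : nat) : nat := stages_len (stages sigma (N + N0) (kf N)).

Definition piece (N : nat) (l : list nat) (x : R) : Prop :=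
  G_from sigma (N + N0) x /\ code sigma x (N + N0) (kf N) = l.

Definition piece_weight (N : nat) (l : list nat) : R :=
  stages_weight t (stages sigma (N + N0) (kf N)) l.

Lemma sum_piece_weight_le N M : sum_words (piece_len N) M (piece_weight N) <= eps / 2 ^ S N.
Proof.
  unfold piece_len, piece_weight, stages. rewrite sum_words_stages_weight_cons.
  assert (Hmid : sum_words (stages_len (mid_stages sigma (N + N0) (kf N))) M
                   (stages_weight t (mid_stages sigma (N + N0) (kf N))) <= 1).
  { apply sum_words_stages_weight_le_1. intros m g Hin.
    apply in_mid_stages in Hin as [Hm ->]. apply mid_stages_small. lia. }
  pose proof (sum_words_nonneg (stages_len (mid_stages sigma (N + N0) (kf N))) M _
                (stages_weight_nonneg t (mid_stages sigma (N + N0) (kf N)))).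
  pose proof (top_stage_small N M).
  pose proof (sum_words_nonneg (2 + (gap sigma (N + N0 + S (kf N)) + block_end sigma (N + N0))) M _
                (stage_weight_nonneg t (N + N0 + S (kf N)))).
  nra.
Qed.

Lemma piece_dist_le N l x0 x y : piece N l x0 -> piece N l x -> piece N l y ->
  Rabs (x - y) <=
  prod_range (fun j => / INR (cf_a j x0) ^ 2) 1 (block_end sigma (N + N0 + S (kf N))).
Proof.
  intros [G0 C0] [Gx Cx] [Gy Cy].
  assert (Hx0 := code_agree sigma sigma_pos sigma_gap x x0 (N + N0) (kf N) ltac:(lia) Gx G0
                  ltac:(congruence)).
  assert (Hy0 := code_agree sigma sigma_pos sigma_gap y x0 (N + N0) (kf N) ltac:(lia) Gy G0
                  ltac:(congruence)).
  destruct Gx as [[Hx [Hix _]] _], Gy as [[Hy [Hiy _]] _].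
  apply Rle_trans with
    (prod_range (fun j => / INR (cf_a j x) ^ 2) 1 (block_end sigma (N + N0 + S (kf N)))).
  - apply cylinder_dist_le; auto. intros j Hj. now rewrite (Hx0 j), (Hy0 j) by lia.
  - right. apply prod_range_ext. intros j Hj. now rewrite (Hx0 j) by lia.
Qed.

Lemma piece_diam_le N l :
  Rbar_le (diam (piece N l)) (Finite delta) /\ diam_pow (t / 2) (piece N l) <= piece_weight N l.
Proof.
  apply diam_bounds_of_witness; auto; [lra|apply stages_weight_nonneg|].
  intros x0 Hx0. pose proof Hx0 as [[HJ0 _] C0].
  set (n := (N + N0 + S (kf N))%nat).
  set (B := prod_range (fun j => / INR (cf_a j x0) ^ 2) 1 (block_end sigma n)).
  exists B. repeat split.
  - apply prod_range_pos. intros j. now apply J_set_inv_sq_digit_pos.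
  - eapply Rle_trans; [apply (prod_inv_sq_digits_le_inv_index x0 _ n HJ0)|apply top_stage_fine].
    pose proof (index_le_sigma sigma sigma_pos sigma_gap n ltac:(unfold n; lia)).
    unfold block_end, n in *. lia.
  - unfold B. rewrite Rpower_prod_inv_sq_digits by exact HJ0.
    unfold piece_weight. rewrite <- C0. unfold n.
    apply prod_digit_weight_le_code_weight; auto. lia.
  - intros x y Hx Hy. now apply (piece_dist_le N l x0).
Qed.

Lemma G_set_in_pieces x : G_set sigma x -> exists N l, length l = piece_len N /\ piece N l x.
Proof.
  intros [HJ [N HN]]. exists N, (code sigma x (N + N0) (kf N)). split; [apply code_length|].
  split; [|reflexivity]. split; [exact HJ|]. intros m Hm1 Hm2. apply HN; lia.
Qed.

End Cover.

Lemma exists_top_stage_index sigma t gam N0 delta eps : 0 < t < 1 -> 0 <= gam ->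
  0 < t - (1 - t) * gam -> 0 < delta -> 0 < eps ->
  (exists N1, forall m, (N1 <= m)%nat -> INR (gap sigma m) <= gam * (INR m - 1)) ->
  exists kf : nat -> nat, forall N,
    (forall M, sum_words (2 + (gap sigma (N + N0 + S (kf N)) + block_end sigma (N + N0))) M
                 (stage_weight t (N + N0 + S (kf N))) <= eps / 2 ^ S N) /\
    / INR (N + N0 + S (kf N)) <= delta.
Proof.
  intros Ht Hg Hk Hdelta Heps Hgap.
  apply (choice (fun N k =>
    (forall M, sum_words (2 + (gap sigma (N + N0 + S k) + block_end sigma (N + N0))) M
                 (stage_weight t (N + N0 + S k)) <= eps / 2 ^ S N) /\
    / INR (N + N0 + S k) <= delta)).
  intros N.
  destruct (gap_stage_sum_eventually_le sigma t gam (block_end sigma (N + N0))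
              (- ln (eps / 2 ^ S N)) Ht Hg Hk Hgap) as [m0 Hm0].
  destruct (INR_unbounded (/ delta)) as [k Hk'].
  assert (Hpos : 0 < eps / 2 ^ S N) by (apply Rdiv_lt_0_compat; [lra|apply pow_lt; lra]).
  exists (k + m0)%nat. split.
  - intros M. rewrite <- (exp_ln (eps / 2 ^ S N)), <- (Ropp_involutive (ln _)) by exact Hpos.
    apply Hm0. lia.
  - assert (Hkn : INR k <= INR (N + N0 + S (k + m0))) by (apply le_INR; lia).
    rewrite <- (Rinv_inv delta). apply Rinv_le_contravar; [apply Rinv_0_lt_compat|]; lra.
Qed.

Lemma G_set_null sigma beta s :
  (forall n, (1 <= n)%nat -> (0 < sigma n)%nat) ->
  (forall n, (1 <= n)%nat -> (sigma n + n <= sigma (S n))%nat) ->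
  1 <= beta ->
  is_lim_seq (fun n => (INR (sigma (S n)) - INR (sigma n)) / INR n) beta ->
  (beta - 1) / (2 * beta) < s < / 2 ->
  hausdorff_measure s (G_set sigma) = Finite 0.
Proof.
  intros Hpos Hgap Hbeta Hlim [Hs1 Hs2].
  set (t := 2 * s).
  assert (Htb : beta - 1 < t * beta).
  { apply (Rmult_lt_compat_r (2 * beta)) in Hs1; [|lra].
    replace ((beta - 1) / (2 * beta) * (2 * beta)) with (beta - 1) in Hs1 by (field; lra).
    unfold t. lra. }
  assert (Ht : 0 < t < 1) by (unfold t in *; split; nra).
  set (c := t / (1 - t)).
  assert (Hc : c * (1 - t) = t) by (unfold c; field; lra).
  assert (Hbc : beta - 1 < c) by nra.
  (* The gap exponent gam must exceed beta - 1 and stay below c = t / (1 - t). *)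
  set (gam := (beta - 1 + c) / 2).
  assert (Hg : 0 <= gam) by (unfold gam; nra).
  assert (Hk : 0 < t - (1 - t) * gam) by (unfold gam; nra).
  assert (HN1 := gap_eventually_le sigma beta gam Hgap Hlim ltac:(unfold gam; lra)).
  destruct (gap_stage_sum_eventually_le sigma t gam 0 0 Ht Hg Hk HN1) as [m0 Hmid].
  replace s with (t / 2) by (unfold t; field).
  apply hausdorff_measure_null_of_word_covers; [lra|]. intros delta eps Hdelta Heps.
  destruct (exists_top_stage_index sigma t gam (S m0) delta eps Ht Hg Hk Hdelta Heps HN1)
    as [kf Hkf].
  exists (piece_len sigma (S m0) kf), (piece sigma (S m0) kf), (piece_weight sigma t (S m0) kf).
  split; [|split; [|split]].
  - intros N l. apply stages_weight_nonneg.
  - apply sum_piece_weight_le; [lia| |apply Hkf].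
    intros m M Hm. rewrite <- exp_0, <- Ropp_0, <- (Nat.add_0_r (gap sigma m)). apply Hmid. lia.
  - intros N l. apply piece_diam_le; auto; [lra|lia|apply Hkf].
  - apply G_set_in_pieces. lia.
Qed.

(* The hypothesis sigma n < sigma (S n) is implied by sigma n + n <= sigma (S n). *)
Theorem proposition3p2 (sigma : nat -> nat) (beta : R) :
  (forall n : nat, (1 <= n)%nat -> (0 < sigma n)%nat) ->
  (forall n : nat, (1 <= n)%nat -> (sigma n < sigma (S n))%nat) ->
  (forall n : nat, (1 <= n)%nat -> (sigma n + n <= sigma (S n))%nat) ->
  1 <= beta ->
  is_lim_seq (fun n : nat => (INR (sigma (S n)) - INR (sigma n)) / INR n) beta ->
  Rbar_le (hausdorff_dim (G_set sigma)) (Finite ((beta - 1) / (2 * beta))).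
Proof.
  intros Hpos _ Hgap Hbeta Hlim.
  apply (hausdorff_dim_le_of_null _ _ (/ 2)).
  - split.
    + apply Rmult_le_pos; [lra|]. apply Rlt_le, Rinv_0_lt_compat. lra.
    + apply (Rmult_lt_reg_r (2 * beta)); [lra|].
      unfold Rdiv. rewrite Rmult_assoc, Rinv_l by lra. lra.
  - intros s Hs. now apply (G_set_null sigma beta).
Qed.
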